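(* Let $n\ge1$ and let $V^i=V^i(u)$, $i=1,\dots,n$, be smooth functions. Consider the conservative hydrodynamic type system $u^i_t=(V^i(u))_x$ written in potential coordinates $b^i$ with $b^i_x=u^i$ as $F^i=b^i_t-V^i(b_x)=0$. Let $C$ be a second-order homogeneous Hamiltonian operator in canonical form $C^{ij}=\partial_x g^{ij}\partial_x$, where $(g^{ij})$ is the inverse of the nondegenerate matrix $g_{ij}=T_{ijk}u^k+g_{0ij}$ with $T_{ijk}$, $g_{0ij}$ constants skew-symmetric with respect to any pair of indices; in potential coordinates $C$ becomes the operator of order zero $C^{ij}=-g^{ij}(b_x)$, i.e. $C(\mathbf p)^i=-g^{ij}p_j$. Then the compatibility condition $\ell_F(C(\mathbf p))=0$ on the cotangent covering holds if and only if, for all indices, $$g_{qj}V^j_{,p}+g_{pj}V^j_{,q}=0,\qquad g_{qk}V^k_{,pl}+g_{pq,k}V^k_{,l}+g_{qk,l}V^k_{,p}=0 .$$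
   Context: Summation over repeated indices is understood; an index after a comma denotes partial derivative with respect to $u^k=b^k_x$, e.g. $V^j_{,p}=\partial V^j/\partial u^p$, $V^k_{,pl}=\partial^2V^k/\partial u^p\partial u^l$, $g_{pq,k}=\partial g_{pq}/\partial u^k$. The linearization of $F$ is $\ell_F(\varphi)^i=D_t\varphi^i-V^i_{,j}D_x\varphi^j$ ($D_t,D_x$ total derivatives). The cotangent covering is the system in $b^i$ and new odd variables $p_i$: $b^i_t=V^i(b_x)$, $p_{i,t}=V^j_{,i}p_{j,x}+V^j_{,il}b^l_{xx}p_j$. The condition $\ell_F(C(\mathbf p))=0$ on the cotangent covering means the expression vanishes identically in the jet variables after eliminating $b_t,p_t$ and their derivatives via the covering equations. *)

From HB Require Import structures.
From mathcomp Require Import all_boot all_order all_algebra.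
From mathcomp Require Import all_classical all_reals all_analysis.
Set Implicit Arguments. Unset Strict Implicit. Unset Printing Implicit Defensive.
Import Order.TTheory GRing.Theory Num.Theory.
Import numFieldNormedType.Exports.
Local Open Scope ring_scope.

Section Jet.
Variables (R : realType) (n : nat).

Definition pd (f : 'rV[R]_n -> R) (k : 'I_n) (u : 'rV[R]_n) : R :=
  'D_(delta_mx 0 k) f u.

Fixpoint iterpd (s : seq 'I_n) (f : 'rV[R]_n -> R) : 'rV[R]_n -> R :=
  match s with
  | [::] => f
  | k :: s' => pd (iterpd s' f) k
  end.

Definition smooth (f : 'rV[R]_n -> R) : Prop :=
  forall (s : seq 'I_n) (u : 'rV[R]_n), differentiable (iterpd s f) u.

(* Jet functions on the cotangent covering depending on u0 = b_x and
   P0 = p (the odd fibre variables, treated as commuting real coordinates;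
   all expressions involved are linear in p).  Remaining jet coordinates
   used: u1 = b_xx, P1 = p_x. *)
Definition jetfun := 'rV[R]_n -> 'rV[R]_n -> R.

Definition Dx (phi : jetfun) (u0 u1 P0 P1 : 'rV[R]_n) : R :=
  \sum_(l < n) pd (phi ^~ P0) l u0 * u1 0 l
  + \sum_(j < n) pd (phi u0) j P0 * P1 0 j.

(* total t-derivative D_t on the cotangent covering, after eliminating
   b_t, p_t and their derivatives:
     b^k_{xt} = D_x (V^k(b_x)),
     p_{i,t} = V^j_{,i} p_{j,x} + V^j_{,il} b^l_{xx} p_j. *)
Definition Dt_cov (V : 'I_n -> 'rV[R]_n -> R) (phi : jetfun)
    (u0 u1 P0 P1 : 'rV[R]_n) : R :=
  \sum_(k < n) pd (phi ^~ P0) k u0 * Dx (fun u _ => V k u) u0 u1 P0 P1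
  + \sum_(i < n) pd (phi u0) i P0 *
      (\sum_(j < n) pd (V j) i u0 * P1 0 j
       + \sum_(j < n) \sum_(l < n) pd (pd (V j) i) l u0 * u1 0 l * P0 0 j).

Definition ellF_cov (V : 'I_n -> 'rV[R]_n -> R) (phi : 'I_n -> jetfun)
    (i : 'I_n) (u0 u1 P0 P1 : 'rV[R]_n) : R :=
  Dt_cov V (phi i) u0 u1 P0 P1
  - \sum_(j < n) pd (V i) j u0 * Dx (phi j) u0 u1 P0 P1.

Definition gmetric (T : 'I_n -> 'I_n -> 'I_n -> R) (g0 : 'M[R]_n)
    (u : 'rV[R]_n) : 'M[R]_n :=
  \matrix_(i, j) (\sum_(k < n) T i j k * u 0 k + g0 i j).

Definition Cop (G : 'rV[R]_n -> 'M[R]_n) (i : 'I_n) : jetfun :=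
  fun u0 P0 => - \sum_(j < n) (invmx (G u0)) i j * P0 0 j.

End Jet.

From HB Require Import structures.
From mathcomp Require Import all_boot all_order all_algebra.
From mathcomp Require Import all_classical all_reals all_analysis.
From mathcomp Require Import ring.
Import Order.TTheory GRing.Theory Num.Theory.
Import numFieldNormedType.Exports.
Local Open Scope ring_scope.

(* Everything is pointwise in the jet variables.  Write h = g^-1, A = (V^i_{,j})
   and T_l = (T_{abl})_{ab} = dg/du^l.  Since d(g^-1)/du^l = - h T_l h, the
   expression ell_F(C(p))^i is linear in p_x and bilinear in (b_xx, p): its p_x
   coefficient is A h - h A^T and its b^l_xx p coefficient is
   sum_k V^k_{,l} h T_k h - h (d_l A)^T - A h T_l h.  It vanishes identically iff
   both coefficient matrices vanish.  Conjugating by g, the first one vanishes iff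
   g A = A^T g, i.e. (g being skew) iff g A is skew, which is the first condition;
   given this, g (second coefficient) g = sum_k V^k_{,l} T_k - (d_l A)^T g - A^T T_l,
   whose entries are the left-hand sides of the second condition.  Smoothness of V,
   n >= 1, the existence of a nondegenerate point and the skew-symmetries of T
   other than in its first two indices are not needed. *)

Section PartialDerivative.
Local Open Scope classical_set_scope.
Context {R : realType} {n : nat}.
Implicit Types (f : 'rV[R]_n -> R) (u : 'rV[R]_n) (k : 'I_n).

Lemma pd_cvg f k u (Q : R -> R) (c : R) :
  (\forall t \near (0 : R)^', t^-1 * (f (t *: delta_mx 0 k + u) - f u) = Q t) ->
  Q t @[t --> (0 : R)^'] --> c -> pd f k u = c.
Proof.
move=> fQ Qc; apply: cvg_lim; first exact: Rhausdorff.
apply: cvg_trans Qc; apply: near_eq_cvg; near=> t.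
by rewrite -(near fQ t).
Unshelve. all: by end_near. Qed.

Lemma pd_affine f k u (c : R) :
  (forall t, f (t *: delta_mx 0 k + u) = f u + t * c) -> pd f k u = c.
Proof.
move=> fc; apply: (pd_cvg _ _ _ (fun=> c)); last exact: cvg_cst.
near=> t; rewrite fc addrC addKr mulKf //.
exact: (near (nbhs_dnbhs_neq 0) t).
Unshelve. all: by end_near. Qed.

Lemma pd_cst (c : R) k u : pd (fun=> c) k u = 0.
Proof. by apply: pd_affine => t; rewrite mulr0 addr0. Qed.

End PartialDerivative.

Lemma invmxB (R : comUnitRingType) (n : nat) (A B : 'M[R]_n) :
  A \in unitmx -> B \in unitmx -> invmx A - invmx B = invmx A *m (B - A) *m invmx B.
Proof.
move=> Au Bu; rewrite mulmxBr mulmxBl mulVmx // mul1mx -mulmxA mulmxV //.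
by rewrite mulmx1.
Qed.

Section InverseAlongLine.
Local Open Scope classical_set_scope.
Context {R : realType} {n : nat}.
Variables g M : 'M[R]_n.
Hypothesis g_unit : g \in unitmx.

(* Along the line g + t M the adjugate and the determinant are polynomial in t,
   which makes invmx continuous at t = 0. *)
Let line_poly : 'M[{poly R}]_n := \matrix_(i, j) ((g i j)%:P + (M i j)%:P * 'X).

Let line_polyE t : map_mx (horner_eval t) line_poly = g + t *: M.
Proof.
apply/matrixP => i j; rewrite !mxE /horner_eval /=.
by rewrite hornerD hornerM hornerX !hornerC mulrC.
Qed.

Let det_line t : \det (g + t *: M) = (\det line_poly).[t].
Proof. by rewrite -line_polyE det_map_mx. Qed.

Let adj_line t i j : \adj (g + t *: M) i j = (\adj line_poly i j).[t].
Proof. by rewrite -line_polyE -map_mx_adj mxE. Qed.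

Let invmx_line t i j : g + t *: M \in unitmx ->
  invmx (g + t *: M) i j = (\adj line_poly i j).[t] / (\det line_poly).[t].
Proof. by move=> gtM; rewrite /invmx gtM mxE adj_line det_line mulrC. Qed.

Let g_line : g = g + 0 *: M.
Proof. by rewrite scale0r addr0. Qed.

Lemma unitmx_line_near : \forall t \near (0 : R), g + t *: M \in unitmx.
Proof.
have det0 : (\det line_poly).[0] != 0 by rewrite -det_line -g_line -unitfE -unitmxE.
have det_near : \forall t \near (0 : R), (\det line_poly).[t] != 0.
  exact: cvgr_neq0 (@continuous_horner _ _ 0) det0.
by apply: filterS det_near => t dett; rewrite unitmxE unitfE det_line.
Qed.

Lemma invmx_line_cvg i j : invmx (g + t *: M) i j @[t --> (0 : R)] --> invmx g i j.
Proof.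
have -> : invmx g i j = (\adj line_poly i j).[0] / (\det line_poly).[0].
  by rewrite -invmx_line -g_line.
apply: cvg_trans (near_eq_cvg _) _; last first.
  apply: cvgM; first exact: continuous_horner.
  apply: cvgV; last exact: continuous_horner.
  by rewrite -det_line -g_line -unitfE -unitmxE.
near=> t; rewrite /= invmx_line //.
exact: (near unitmx_line_near t).
Unshelve. all: by end_near. Qed.

Lemma invmx_line_derivative i j :
  t^-1 * (invmx (g + t *: M) i j - invmx g i j) @[t --> (0 : R)^']
  --> - (invmx g *m M *m invmx g) i j.
Proof.
have quotientE : \forall t \near (0 : R)^',
    - (invmx (g + t *: M) *m M *m invmx g) i j
    = t^-1 * (invmx (g + t *: M) i j - invmx g i j).
  near=> t.
  have t0 : t != 0 by exact: (near (nbhs_dnbhs_neq 0) t).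
  have gtM : g + t *: M \in unitmx.
    exact: (near (cvg_within _ unitmx_line_near) t).
  have -> : invmx (g + t *: M) i j - invmx g i j = (invmx (g + t *: M) - invmx g) i j.
    by rewrite !mxE.
  rewrite invmxB // opprD addNKr -scaleNr -scalemxAr -scalemxAl.
  by rewrite [in RHS]mxE mulNr mulrN mulKf.
apply: cvg_trans (near_eq_cvg quotientE) _.
apply: cvgN; rewrite mxE; under eq_cvg do rewrite mxE.
apply: cvg_big => //; first exact: add_continuous.
move=> d _; apply: cvgMr_tmp; rewrite mxE; under eq_cvg do rewrite mxE.
apply: cvg_big => //; first exact: add_continuous.
by move=> c _; apply: cvgMr_tmp; exact: cvg_within_filter (invmx_line_cvg i c).
Unshelve. all: by end_near. Qed.

End InverseAlongLine.

Lemma sum_mul_delta (R : pzSemiRingType) (n : nat) (a : 'I_n -> R) (k : 'I_n) :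
  \sum_m a m * (delta_mx 0 k : 'rV[R]_n) 0 m = a k.
Proof.
under eq_bigr => m _ do rewrite mxE eqxx mulr_natr mulrb.
by rewrite -big_mkcond big_pred1_eq.
Qed.

Definition dgmetric {R : Type} {n : nat} (T : 'I_n -> 'I_n -> 'I_n -> R) (k : 'I_n)
  : 'M[R]_n := \matrix_(a, b) T a b k.

Section MetricAndOperator.
Context {R : realType} {n : nat}.
Variables (T : 'I_n -> 'I_n -> 'I_n -> R) (g0 : 'M[R]_n).

Lemma gmetric_line k t u :
  gmetric T g0 (t *: delta_mx 0 k + u) = gmetric T g0 u + t *: dgmetric T k.
Proof.
apply/matrixP => a b; rewrite !mxE addrAC; congr (_ + _).
under eq_bigr => m _ do rewrite mxE mulrDr.
rewrite big_split /= addrC; congr (_ + _).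
under eq_bigr => m _ do rewrite mxE mulrCA.
by rewrite -mulr_sumr sum_mul_delta mulrC.
Qed.

Lemma pd_gmetric p q k u : pd (fun v => gmetric T g0 v p q) k u = T p q k.
Proof. by apply: pd_affine => t; rewrite gmetric_line !mxE mulrC. Qed.

Lemma pd_Cop_p (G : 'rV[R]_n -> 'M[R]_n) i m u P :
  pd (Cop G i u) m P = - invmx (G u) i m.
Proof.
apply: pd_affine => t; rewrite /Cop mulrN -opprD; congr (- _).
under eq_bigr => j _ do rewrite mxE mulrDr.
rewrite big_split /= addrC; congr (_ + _).
under eq_bigr => j _ do rewrite mxE mulrCA.
by rewrite -mulr_sumr sum_mul_delta.
Qed.

Lemma pd_Cop_u i l u P : gmetric T g0 u \in unitmx ->
  pd (Cop (gmetric T g0) i ^~ P) l u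
  = \sum_j (invmx (gmetric T g0 u) *m dgmetric T l *m invmx (gmetric T g0 u)) i j * P 0 j.
Proof.
move=> gu; set g := gmetric T g0 u.
apply: (pd_cvg _ _ _ (fun t => \sum_j
  - (t^-1 * (invmx (g + t *: dgmetric T l) i j - invmx g i j)) * P 0 j)).
  near=> t; rewrite /Cop gmetric_line -/g opprK addrC -sumrB mulr_sumr.
  by apply: eq_bigr => j _; ring.
apply: cvg_big => [|j _]; first exact: add_continuous.
apply: cvgMr_tmp; rewrite -[(_ *m _ *m _) i j]opprK.
by apply: cvgN; exact: invmx_line_derivative.
Unshelve. all: by end_near. Qed.

End MetricAndOperator.

Section JetForm.
Context {R : comRingType} {n : nat}.
Implicit Types (X : 'M[R]_n) (Y : 'I_n -> 'M[R]_n) (i : 'I_n).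

(* The general expression linear in p_x (= P1) and bilinear in (b_xx, p)
   (= (u1, P0)): X_{ib} p_{b,x} + Y_{l,ib} b^l_xx p_b. *)
Definition jet_form X Y (u1 P0 P1 : 'rV[R]_n) i : R :=
  \sum_b P1 0 b * X i b + \sum_l u1 0 l * \sum_b P0 0 b * Y l i b.

Lemma jet_formD X1 Y1 X2 Y2 (u1 P0 P1 : 'rV[R]_n) i :
  jet_form X1 Y1 u1 P0 P1 i + jet_form X2 Y2 u1 P0 P1 i
  = jet_form (X1 + X2) (fun l => Y1 l + Y2 l) u1 P0 P1 i.
Proof.
rewrite /jet_form addrACA; congr (_ + _); rewrite -big_split /=.
  by apply: eq_bigr => b _; rewrite mxE mulrDr.
apply: eq_bigr => l _; rewrite -mulrDr -big_split /=; congr (_ * _).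
by apply: eq_bigr => b _; rewrite mxE mulrDr.
Qed.

Lemma jet_form_eq0 X Y :
  (forall u1 P0 P1 i, jet_form X Y u1 P0 P1 i = 0) <-> X = 0 /\ forall l, Y l = 0.
Proof.
split=> [form0 | [-> Y0] u1 P0 P1 i]; last first.
  rewrite /jet_form big1 => [|b _]; last by rewrite mxE mulr0.
  by rewrite add0r big1 // => l _; rewrite Y0 big1 ?mulr0 // => b _; rewrite mxE mulr0.
split.
  apply/matrixP => i b; have := form0 0 0 (delta_mx 0 b) i.
  rewrite /jet_form [X in _ + X]big1 => [|l _]; last by rewrite mxE mul0r.
  by rewrite addr0 (eq_bigr _ (fun j _ => mulrC _ _)) sum_mul_delta mxE.
move=> l; apply/matrixP => i b; have := form0 (delta_mx 0 l) (delta_mx 0 b) 0 i.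
rewrite /jet_form big1 => [|c _]; last by rewrite mxE mul0r.
rewrite add0r (eq_bigr _ (fun j _ => mulrC _ _)) sum_mul_delta.
by rewrite (eq_bigr _ (fun j _ => mulrC _ _)) sum_mul_delta mxE.
Qed.

Lemma jet_formN X Y (u1 P0 P1 : 'rV[R]_n) i :
  - jet_form X Y u1 P0 P1 i = jet_form (- X) (fun l => - Y l) u1 P0 P1 i.
Proof.
rewrite /jet_form opprD -!sumrN; congr (_ + _); apply: eq_bigr => l _.
  by rewrite mxE mulrN.
rewrite -mulrN -sumrN; congr (_ * _); apply: eq_bigr => b _.
by rewrite mxE mulrN.
Qed.

Lemma jet_form_mulmx (B X : 'M[R]_n) Y (u1 P0 P1 : 'rV[R]_n) i :
  \sum_j B i j * jet_form X Y u1 P0 P1 j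
  = jet_form (B *m X) (fun l => B *m Y l) u1 P0 P1 i.
Proof.
rewrite /jet_form; under eq_bigr do rewrite mulrDr; rewrite big_split /=.
congr (_ + _).
  under eq_bigr do rewrite mulr_sumr; rewrite exchange_big /=.
  apply: eq_bigr => b _; rewrite mxE mulr_sumr.
  by apply: eq_bigr => j _; ring.
under eq_bigr => j _ do rewrite mulr_sumr.
under eq_bigr => j _ do under eq_bigr => l _ do rewrite mulr_sumr mulr_sumr.
rewrite exchange_big /=; apply: eq_bigr => l _.
rewrite exchange_big /= mulr_sumr; apply: eq_bigr => b _.
rewrite mxE !mulr_sumr.
by apply: eq_bigr => j _; ring.
Qed.

Lemma transport_termE (A : 'M[R]_n) (K : 'I_n -> 'M[R]_n) (u1 P0 P1 : 'rV[R]_n) i :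
  \sum_k (\sum_j K k i j * P0 0 j) * (\sum_l A k l * u1 0 l)
  = jet_form 0 (fun l => \sum_k A k l *: K k) u1 P0 P1 i.
Proof.
rewrite /jet_form [in RHS]big1 ?add0r => [|b _]; last by rewrite mxE mulr0.
under eq_bigr => k _ do rewrite big_distrlr /=.
rewrite exchange_big /=; under eq_bigr => j _ do rewrite exchange_big /=.
rewrite exchange_big /=; apply: eq_bigr => l _; rewrite mulr_sumr.
apply: eq_bigr => b _; rewrite summxE !mulr_sumr.
by apply: eq_bigr => k _; rewrite mxE; ring.
Qed.

End JetForm.

Section MatrixIdentities.
Context {R : comUnitRingType} {n : nat}.
Implicit Types g X Y A W : 'M[R]_n.

Lemma mulmx_invmx_eqP g X Y : g \in unitmx ->
  X *m invmx g = invmx g *m Y <-> g *m X = Y *m g.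
Proof.
move=> gu; split=> e.
  by rewrite -[LHS]mulmx1 -(mulVmx gu) mulmxA -(mulmxA g X) e mulmxA mulmxV // mul1mx.
rewrite -[LHS]mul1mx -(mulVmx gu) -mulmxA (mulmxA g) e.
by rewrite -mulmxA mulmxV // mulmx1.
Qed.

Lemma conjmx_eq0P g X : g \in unitmx -> g *m X *m g = 0 <-> X = 0.
Proof.
move=> gu; split=> [e|->]; last by rewrite mulmx0 mul0mx.
have := congr1 (fun Y => invmx g *m Y *m invmx g) e.
by rewrite /= mulmx0 mul0mx !mulmxA mulVmx // mul1mx -mulmxA mulmxV // mulmx1.
Qed.

Lemma skew_mulmx_trP g A : g^T = - g ->
  g *m A = A^T *m g <-> g *m A + (g *m A)^T = 0.
Proof.
move=> gT; rewrite trmx_mul gT mulmxN.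
by split=> [->|/eqP]; [rewrite subrr | rewrite subr_eq0 => /eqP].
Qed.

Lemma second_coeff_conjmx g A W (D : 'I_n -> 'M[R]_n) l :
  g \in unitmx -> g *m A = A^T *m g ->
  g *m (\sum_k A k l *: (invmx g *m D k *m invmx g) - invmx g *m W
        - A *m (invmx g *m D l *m invmx g)) *m g
  = \sum_k A k l *: D k - W *m g - A^T *m D l.
Proof.
move=> gu gA; rewrite !mulmxBr !mulmxBl; congr (_ - _ - _).
- rewrite mulmx_sumr mulmx_suml; apply: eq_bigr => k _.
  by rewrite -scalemxAr -scalemxAl !mulmxA mulmxV // mul1mx -mulmxA mulVmx // mulmx1.
- by rewrite mulmxA mulmxV // mul1mx.
- rewrite !mulmxA gA -(mulmxA _ g) mulmxV // mulmx1.
  by rewrite -mulmxA mulVmx // mulmx1.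
Qed.

End MatrixIdentities.

Lemma second_coeff_conjmx_entry (R : comRingType) (n : nat) (g A W : 'M[R]_n)
    (T : 'I_n -> 'I_n -> 'I_n -> R) l p q :
  g^T = - g -> (forall i j k, T i j k = - T j i k) ->
  (\sum_k A k l *: dgmetric T k - W *m g - A^T *m dgmetric T l) p q
  = \sum_k g q k * W p k + \sum_k T p q k * A k l + \sum_k T q k l * A k p.
Proof.
move=> /matrixP gT T12; rewrite !mxE summxE -!sumrN -!big_split /=.
apply: eq_bigr => k _; have := gT k q; rewrite !mxE => ->.
by rewrite (T12 k q l); ring.
Qed.

Definition jacobian {R : realType} {n : nat} (V : 'I_n -> 'rV[R]_n -> R)
    (u : 'rV[R]_n) : 'M[R]_n :=
  \matrix_(i, j) pd (V i) j u.

Definition djacobianT {R : realType} {n : nat} (V : 'I_n -> 'rV[R]_n -> R)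
    (l : 'I_n) (u : 'rV[R]_n) : 'M[R]_n :=
  \matrix_(m, j) pd (pd (V j) m) l u.

Definition first_compat {R : realType} {n : nat} (V : 'I_n -> 'rV[R]_n -> R)
    (G : 'rV[R]_n -> 'M[R]_n) (u : 'rV[R]_n) (p q : 'I_n) : R :=
  \sum_j G u q j * pd (V j) p u + \sum_j G u p j * pd (V j) q u.

Definition second_compat {R : realType} {n : nat} (V : 'I_n -> 'rV[R]_n -> R)
    (G : 'rV[R]_n -> 'M[R]_n) (u : 'rV[R]_n) (p q l : 'I_n) : R :=
  \sum_k G u q k * pd (pd (V k) p) l u
  + \sum_k pd (fun v => G v p q) k u * pd (V k) l u
  + \sum_k pd (fun v => G v q k) l u * pd (V k) p u.

Section Compatibility.
Context {R : realType} {n : nat}.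
Variable V : 'I_n -> 'rV[R]_n -> R.
Context {T : 'I_n -> 'I_n -> 'I_n -> R} {g0 : 'M[R]_n}.
Hypothesis T_skew : forall i j k, T i j k = - T j i k.
Hypothesis g0_skew : forall i j, g0 i j = - g0 j i.

Lemma gmetric_skew u : (gmetric T g0 u)^T = - gmetric T g0 u.
Proof.
apply/matrixP => a b; rewrite !mxE opprD -sumrN g0_skew; congr (_ + _).
by apply: eq_bigr => k _; rewrite T_skew mulNr.
Qed.

Context {u : 'rV[R]_n}.
Hypothesis g_unit : gmetric T g0 u \in unitmx.

Local Notation g := (gmetric T g0 u).
Local Notation h := (invmx (gmetric T g0 u)).
Local Notation A := (jacobian V u).
Local Notation K l := (h *m dgmetric T l *m h).

Lemma ellF_cov_CopE u1 P0 P1 i :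
  ellF_cov V (Cop (gmetric T g0)) i u u1 P0 P1
  = jet_form (A *m h - h *m A^T)
      (fun l => \sum_k A k l *: K k - h *m djacobianT V l u - A *m K l) u1 P0 P1 i.
Proof.
have DxV k : Dx (fun v _ => V k v) u u1 P0 P1 = \sum_l A k l * u1 0 l.
  rewrite /Dx [X in _ + X]big1 ?addr0 => [|j _]; last by rewrite pd_cst mul0r.
  by apply: eq_bigr => l _; rewrite mxE.
have DxCop j :
    Dx (Cop (gmetric T g0) j) u u1 P0 P1 = jet_form (- h) (fun l => K l) u1 P0 P1 j.
  rewrite /Dx /jet_form addrC; congr (_ + _).
    by apply: eq_bigr => m _; rewrite pd_Cop_p mxE mulrC.
  apply: eq_bigr => l _; rewrite pd_Cop_u // mulrC; congr (_ * _).
  by apply: eq_bigr => b _; rewrite mulrC.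
have ptE m : \sum_j pd (V j) m u * P1 0 j
    + \sum_j \sum_l pd (pd (V j) m) l u * u1 0 l * P0 0 j
    = jet_form A^T (djacobianT V ^~ u) u1 P0 P1 m.
  rewrite /jet_form; congr (_ + _).
    by apply: eq_bigr => j _; rewrite !mxE mulrC.
  rewrite exchange_big /=; apply: eq_bigr => l _; rewrite mulr_sumr.
  by apply: eq_bigr => b _; rewrite mxE; ring.
transitivity (\sum_k (\sum_j K k i j * P0 0 j) * (\sum_l A k l * u1 0 l)
  + \sum_m (- h) i m * jet_form A^T (djacobianT V ^~ u) u1 P0 P1 m
  - \sum_j A i j * jet_form (- h) (fun l => K l) u1 P0 P1 j).
  rewrite /ellF_cov /Dt_cov; congr (_ + _ - _).
  - by apply: eq_bigr => k _; rewrite pd_Cop_u // DxV.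
  - by apply: eq_bigr => m _; rewrite pd_Cop_p ptE mxE.
  - by apply: eq_bigr => j _; rewrite DxCop [A i j]mxE.
rewrite (transport_termE _ _ _ _ P1) !jet_form_mulmx jet_formN !jet_formD.
congr jet_form; first by rewrite add0r mulNmx mulmxN opprK addrC.
by apply: funext => l; rewrite mulNmx.
Qed.

Lemma ellF_cov_Cop_eq0P :
  (forall u1 P0 P1 i, ellF_cov V (Cop (gmetric T g0)) i u u1 P0 P1 = 0) <->
  (forall p q, first_compat V (gmetric T g0) u p q = 0) /\
  (forall p q l, second_compat V (gmetric T g0) u p q l = 0).
Proof.
have gT := gmetric_skew u.
have coeff1P : A *m h - h *m A^T = 0 <-> g *m A = A^T *m g.
  rewrite -mulmx_invmx_eqP //; split=> [/eqP|->]; last by rewrite subrr.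
  by rewrite subr_eq0 => /eqP.
have first_compatE p q :
    first_compat V (gmetric T g0) u p q = (g *m A + (g *m A)^T) q p.
  by rewrite !mxE; congr (_ + _); apply: eq_bigr => j _; rewrite [A _ _]mxE.
have second_compatE p q l :
    second_compat V (gmetric T g0) u p q l
    = (\sum_k A k l *: dgmetric T k - djacobianT V l u *m g - A^T *m dgmetric T l) p q.
  rewrite /second_compat second_coeff_conjmx_entry //.
  congr (_ + _ + _); apply: eq_bigr => k _;
  by rewrite ?pd_gmetric ?[A _ _]mxE ?[djacobianT _ _ _ _ _]mxE.
split=> [ell0 | [compat1 compat2] u1 P0 P1 i].
  have /jet_form_eq0[/coeff1P gA coeff2] := fun u1 P0 P1 i =>
    etrans (esym (ellF_cov_CopE u1 P0 P1 i)) (ell0 u1 P0 P1 i).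
  split=> [p q | p q l].
    by rewrite first_compatE (proj1 (skew_mulmx_trP g A gT) gA) mxE.
  by rewrite second_compatE -second_coeff_conjmx // coeff2 mulmx0 mul0mx mxE.
have gA : g *m A = A^T *m g.
  by apply/(skew_mulmx_trP g A gT)/matrixP => q p; rewrite -first_compatE compat1 mxE.
rewrite ellF_cov_CopE; move: u1 P0 P1 i; apply/jet_form_eq0; split.
  exact/coeff1P.
move=> l; apply/(conjmx_eq0P _ _ g_unit); rewrite second_coeff_conjmx //.
by apply/matrixP => p q; rewrite -second_compatE compat2 mxE.
Qed.

End Compatibility.

Theorem mainTheorem5 (R : realType) (n : nat) (hn : (1 <= n)%N)
  (V : 'I_n -> 'rV[R]_n -> R) (hV : forall i, smooth (V i))
  (T : 'I_n -> 'I_n -> 'I_n -> R) (g0 : 'M[R]_n)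
  (hT12 : forall i j k, T i j k = - T j i k)
  (hT23 : forall i j k, T i j k = - T i k j)
  (hT13 : forall i j k, T i j k = - T k j i)
  (hg0 : forall i j, g0 i j = - g0 j i)
  (hnd : exists u : 'rV[R]_n, gmetric T g0 u \in unitmx) :
  (forall (u0 u1 P0 P1 : 'rV[R]_n), gmetric T g0 u0 \in unitmx ->
     forall i : 'I_n, ellF_cov V (Cop (gmetric T g0)) i u0 u1 P0 P1 = 0)
  <->
  (forall u : 'rV[R]_n, gmetric T g0 u \in unitmx ->
     (forall p q : 'I_n,
        \sum_(j < n) gmetric T g0 u q j * pd (V j) p u
        + \sum_(j < n) gmetric T g0 u p j * pd (V j) q u = 0)
     /\
     (forall p q l : 'I_n,
        \sum_(k < n) gmetric T g0 u q k * pd (pd (V k) p) l u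
        + \sum_(k < n) pd (fun v => gmetric T g0 v p q) k u * pd (V k) l u
        + \sum_(k < n) pd (fun v => gmetric T g0 v q k) l u * pd (V k) p u
        = 0)).
Proof.
split=> [ell0 u gu | compat u u1 P0 P1 gu].
  by apply/(ellF_cov_Cop_eq0P V hT12 hg0 gu) => u1 P0 P1; exact: ell0.
by move: u1 P0 P1; apply/(ellF_cov_Cop_eq0P V hT12 hg0 gu); exact: compat.
Qed.
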